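(* If $A\subseteq\Omega$ is finite, then $A\in\mathcal{B}_{\mathcal{L}}$ and $\widehat{\mu}(A)=0$; that is, $A=\bigcap_n A^{(n)}$ and $\lim_{n\to\infty}\mu(A^{(n)})=0$.
   Context: For $n\ge1$, $\Omega_n$ is the set of strings $\alpha_0\alpha_1\cdots\alpha_n$ with $\alpha_k\in\{0,1\}$, $\alpha_0=0$. For $\omega=\alpha_0\cdots\alpha_n$, $\omega'=\alpha'_0\cdots\alpha'_n\in\Omega_n$ let $D^n(\omega,\omega')=2^{-n}\prod_{k=1}^n i^{|\alpha_k-\alpha_{k-1}|}\prod_{k=1}^n i^{-|\alpha'_k-\alpha'_{k-1}|}\,\delta_{\alpha_n\alpha'_n}$ ($i=\sqrt{-1}$) and for $E\subseteq\Omega_n$, $\mu_n(E)=\sum_{\omega,\omega'\in E}D^n(\omega,\omega')$. $\Omega$ is the set of infinite sequences $\alpha_0\alpha_1\cdots$ with $\alpha_k\in\{0,1\}$, $\alpha_0=0$. A cylinder set is a set $\{\alpha_0\alpha_1\cdots\in\Omega:\alpha_0\cdots\alpha_n\in E\}$ with $E\subseteq\Omega_n$, and $\mu$ of it is $\mu_n(E)$ (well defined). For $A\subseteq\Omega$ and $n\ge0$, $A^{(n)}=\{\omega\in\Omega:\text{some }\omega'\in A\text{ has the same first }n+1\text{ entries as }\omega\}$ (a cylinder set). $A$ is a lower set if $A=\bigcap_nA^{(n)}$; $A$ is beneficial if $\lim_n\mu(A^{(n)})$ exists and is finite, with $\widehat{\mu}(A)$ that limit; $\mathcal{B}_{\mathcal{L}}$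 is the collection of beneficial lower sets. *)

From HB Require Import structures.
From mathcomp Require Import all_boot all_order all_algebra.
From mathcomp Require Import all_classical all_reals.
From mathcomp.real_closed Require Import complex.
Import Order.TTheory GRing.Theory Num.Theory.

Set Implicit Arguments.
Unset Strict Implicit.
Unset Printing Implicit Defensive.

Local Open Scope ring_scope.
Local Open Scope classical_set_scope.
Local Open Scope complex_scope.

(* Omega : infinite 0/1 sequences alpha_0 alpha_1 ... with alpha_0 = 0
   (0 = false, 1 = true). *)
Definition Omega : set (nat -> bool) := [set w | w 0%N = false].

(* Omega_n : strings alpha_0 ... alpha_n with alpha_0 = 0, encoded as
   finite functions on 'I_n.+1 (indices 0..n). *)
Definition word (n : nat) := {ffun 'I_n.+1 -> bool}.

Definition in_Omega_n (n : nat) (w : word n) : bool := w ord0 == false.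

Definition jump (n : nat) (w : word n) (k : nat) : nat :=
  (w (inord k) != w (inord k.-1)).

Definition Dn (R : rcfType) (n : nat) (w w' : word n) : R[i] :=
  (2%:R ^- n)
  * (\prod_(1 <= k < n.+1) ('i ^+ jump w k))
  * (\prod_(1 <= k < n.+1) ('i ^- jump w' k))
  * (w ord_max == w' ord_max)%:R.

Definition mu_n (R : rcfType) (n : nat) (E : {set word n}) : R[i] :=
  \sum_(w in E) \sum_(w' in E) Dn R w w'.

Definition prefix (n : nat) (w : nat -> bool) : word n :=
  [ffun k : 'I_n.+1 => w (nat_of_ord k)].

Definition prefixes (n : nat) (A : set (nat -> bool)) : {set word n} :=
  [set u : word n | `[< exists2 a, A a & prefix n a = u >]].

(* A^{(n)} : sequences agreeing in the first n+1 entries with some member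
   of A (intersected with Omega, since A^{(n)} is a subset of Omega). *)
Definition cyl (A : set (nat -> bool)) (n : nat) : set (nat -> bool) :=
  [set w | Omega w /\ exists2 a, A a & forall k, (k <= n)%N -> w k = a k].

(* mu of the cylinder set A^{(n)} = {w in Omega : w_0..w_n in prefixes n A} *)
Definition mu_cyl (R : rcfType) (A : set (nat -> bool)) (n : nat) : R[i] :=
  mu_n R (prefixes n A).

Definition lower_set (A : set (nat -> bool)) : Prop :=
  A = \bigcap_(n in [set: nat]) cyl A n.

Definition cvgC (R : rcfType) (u : nat -> R[i]) (l : R[i]) : Prop :=
  forall e : R, 0 < e -> exists N : nat, forall n, (N <= n)%N ->
    `|u n - l| < e%:C.

Definition beneficial (R : rcfType) (A : set (nat -> bool)) : Prop :=
  exists l : R[i], cvgC (mu_cyl R A) l.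

Definition in_BL (R : rcfType) (A : set (nat -> bool)) : Prop :=
  lower_set A /\ beneficial R A.

(* Every word of A^(n) is the prefix of one of the finitely many members of A,
   so at most #|A| words occur and, since |D^n| <= 2^-n, the triangle
   inequality gives |mu(A^(n))| <= #|A|^2 2^-n -> 0.  A is a lower set because
   finitely many sequences different from w all differ from w before some
   common index N, so a sequence lying in A^(N) must itself belong to A. *)
From Pilot Require Import Defs.
From HB Require Import structures.
From mathcomp Require Import all_boot all_order all_algebra.
From mathcomp Require Import all_classical all_reals.
From mathcomp.real_closed Require Import complex.
Import Order.TTheory GRing.Theory Num.Theory.
Local Open Scope ring_scope.
Local Open Scope classical_set_scope.
Local Open Scope complex_scope.

Lemma normci (R : rcfType) : `|'i : R[i]| = 1.
Proof. by rewrite normc_def /= expr0n /= add0r expr1n sqrtr1. Qed.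

Lemma norm_Dn_le (R : rcfType) n (w w' : word n) : `|Dn R w w'| <= 2%:R ^- n.
Proof.
have normX k : `|'i ^+ k : R[i]| = 1 by rewrite normrX normci expr1n.
have normXV k : `|'i ^- k : R[i]| = 1 by rewrite normfV normX invr1.
rewrite /Dn !normrM !normr_prod !big1 => [||k _]; rewrite ?normXV ?normX //.
rewrite normfV normrX normr_nat !mulr1 ler_piMr ?invr_ge0 ?exprn_ge0 //.
by case: (_ == _); rewrite normr_nat.
Qed.

Lemma norm_mu_n_le (R : rcfType) n (E : {set word n}) :
  `|mu_n R E| <= (#|E| ^ 2)%:R * 2%:R ^- n.
Proof.
rewrite /mu_n natrX expr2 -mulrA mulr_natl -sumr_const.
apply: le_trans (ler_norm_sum _ _ _) _; apply: ler_sum => w _.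
rewrite mulr_natl -sumr_const.
apply: le_trans (ler_norm_sum _ _ _) _; apply: ler_sum => w' _.
exact: norm_Dn_le.
Qed.

Lemma cvgC_le_geometric0 (R : realType) (c : R) (u : nat -> R[i]) :
  (forall n, `|u n| <= c%:C * 2%:R ^- n) -> cvgC u 0.
Proof.
move=> ub e e0; exists (Num.truncn (e^-1 * c)).+1 => n Nn.
rewrite subr0; apply: le_lt_trans (ub n) _.
have -> : c%:C * 2%:R ^- n = (c / 2%:R ^+ n)%:C.
  by rewrite rmorphM fmorphV rmorphXn rmorph_nat.
rewrite ltcR ltr_pdivrMr ?exprn_gt0 // -ltr_pdivrMl //.
apply: lt_le_trans (truncnS_gt (e^-1 * c)) _.
by rewrite -natrX ler_nat (leq_trans Nn) // ltnW // ltn_expl.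
Qed.

Lemma card_prefixes_seq_le n (s : seq (nat -> bool)) :
  (#|prefixes n [set` s]| <= size s)%N.
Proof.
have sub : prefixes n [set` s] \subset [seq Defs.prefix n a | a <- s].
  by apply/fintype.subsetP => u; rewrite inE => /asboolP [a sa <-]; exact: map_f.
by rewrite (leq_trans (subset_leq_card sub)) // (leq_trans (card_size _)) ?size_map.
Qed.

Lemma eq_of_agree_upto (T : eqType) (s : seq (nat -> T)) (w : nat -> T) :
  exists N, forall a, a \in s -> (forall k, (k <= N)%N -> w k = a k) -> a = w.
Proof.
elim: s => [|b s [N HN]]; first by exists 0%N => a.
have [->|/eqP bw] := eqVneq b w.
  by exists N => a; rewrite inE => /orP[/eqP -> //|/HN].
have [k bk] : exists k, w k <> b k.
  by apply/existsNP => agree; apply: bw; apply/funext => k; rewrite agree.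
exists (maxn k N) => a; rewrite inE => /orP[/eqP -> agree|/HN sa agree].
  by case: bk; rewrite agree // leq_maxl.
by apply: sa => j jN; rewrite agree // (leq_trans jN) // leq_maxr.
Qed.

Lemma lower_set_seq (s : seq (nat -> bool)) :
  [set` s] `<=` Omega -> lower_set [set` s].
Proof.
move=> sO; apply/seteqP; split => [a sa n _|w cylw].
  by split; [exact: sO | exists a].
have [N HN] := eq_of_agree_upto _ s w.
have [_ [a sa aw]] := cylw N I.
by rewrite -(HN a sa aw).
Qed.

Lemma mu_cyl_seq_cvg0 (R : realType) (s : seq (nat -> bool)) :
  cvgC (mu_cyl R [set` s]) 0.
Proof.
apply: (@cvgC_le_geometric0 _ (size s ^ 2)%:R) => n.
apply: le_trans (norm_mu_n_le _ _ _) _.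
rewrite rmorph_nat ler_wpM2r ?invr_ge0 ?exprn_ge0 // ler_nat.
by rewrite leq_sqr card_prefixes_seq_le.
Qed.

Theorem lemma3p4 (R : realType) (A : set (nat -> bool)) :
  A `<=` Omega -> finite_set A ->
  in_BL R A /\ cvgC (mu_cyl R A) 0.
Proof.
move=> AO /finite_seqP[s sA]; subst A.
have cvg0 := mu_cyl_seq_cvg0 R s.
split; last exact: cvg0.
split; first exact: lower_set_seq.
by exists 0; exact: cvg0.
Qed.
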